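(* Let $X,Y$ be finitely supported subsets of invariant sets. (1) $X$ is FSM Dedekind infinite if and only if there exists a finitely supported injective map $\mathbb N\to X$ (with $\mathbb N$ carrying the trivial action). (4) If $X$ contains no infinite uniformly supported subset, then $X$ is not FSM Dedekind infinite. (6) If neither $X$ nor $Y$ is FSM Dedekind infinite, then $X\times Y$ is not FSM Dedekind infinite. (7) If neither $X$ nor $Y$ is FSM Dedekind infinite, then $X+Y$ is not FSM Dedekind infinite.
   Context: Framework (FSM). Work in ZF with a fixed infinite set $A$ of atoms; $S_A$ is the group of bijections of $A$ fixing all but finitely many atoms; $Fix(S)$ is the set of $\pi\in S_A$ fixing each element of $S\subseteq A$; $S$ supports $x$ if $\pi\cdot x=x$ for all $\pi\in Fix(S)$. An invariant set is an $S_A$-set all of whose elements have finite supports; subsets carry $\pi\star Z=\{\pi\cdot z:z\in Z\}$ and a subset is finitely supported if it has a finite support under this action. Ordinary sets such as $\mathbb N$ carry the trivial action. Products carry $\pi\cdot(x,y)=(\pi\cdot x,\pi\cdot y)$; $X+Y=\{(0,x):x\in X\}\cup\{(1,y):y\in Y\}$ with $\pi\cdot(i,z)=(i,\pi\cdot z)$. A function is finitely supported if there is a finite $S$ such that for all $\pi\in Fix(S)$ and $x$ in the domain, $\pi$ preserves domain and codomain and $f(\pi\cdot x)=\pi\cdot f(x)$. A subset is uniformly supported if all its elements are supported by one common finite set of atoms. $X$ is FSM Dedekind infinite if there is a finitely supported injection from $X$ onto a finitely supported proper subset of $X$. *)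

From Stdlib Require Import List.
Import ListNotations.
Set Implicit Arguments.

Record fperm (A : Type) := FPerm {
  pf : A -> A;
  pinv : A -> A;
  pf_pinv : forall a, pinv (pf a) = a;
  pinv_pf : forall a, pf (pinv a) = a;
  pf_fin : exists l : list A, forall a, ~ In a l -> pf a = a }.

Definition infinite_type (A : Type) : Prop := forall l : list A, exists a, ~ In a l.

Definition fixes {A : Type} (S : list A) (p : fperm A) : Prop :=
  forall a, In a S -> pf p a = a.

Definition supports {A X : Type} (act : fperm A -> X -> X) (S : list A) (x : X) : Prop :=
  forall p, fixes S p -> act p x = x.

Record invset (A : Type) := InvSet {
  carrier :> Type;
  act : fperm A -> carrier -> carrier;
  act_id : forall p x, (forall a, pf p a = a) -> act p x = x;
  act_comp : forall p q r x, (forall a, pf r a = pf p (pf q a)) ->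
                             act r x = act p (act q x);
  act_fin : forall x, exists S : list A, supports act S x }.

Arguments act {A} i p _.

Definition pstar {A : Type} (U : invset A) (p : fperm A) (Z : U -> Prop) : U -> Prop :=
  fun y => exists x, Z x /\ y = act U p x.

Definition fs_subset {A : Type} (U : invset A) (Z : U -> Prop) : Prop :=
  exists S : list A, forall p, fixes S p -> forall y, pstar U p Z y <-> Z y.

Definition fs_fun {A : Type} (U V : invset A) (X : U -> Prop) (Y : V -> Prop)
  (f : U -> V) : Prop :=
  (forall x, X x -> Y (f x)) /\
  exists S : list A, forall p, fixes S p ->
    (forall y, pstar U p X y <-> X y) /\
    (forall y, pstar V p Y y <-> Y y) /\
    (forall x, X x -> f (act U p x) = act V p (f x)).

Definition inj_on {U V : Type} (X : U -> Prop) (f : U -> V) : Prop :=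
  forall x y, X x -> X y -> f x = f y -> x = y.

Definition fsm_dedekind_infinite {A : Type} (U : invset A) (X : U -> Prop) : Prop :=
  exists (Z : U -> Prop) (f : U -> U),
    fs_subset U Z /\ (forall z, Z z -> X z) /\ (exists x, X x /\ ~ Z x) /\
    fs_fun U U X Z f /\ inj_on X f /\
    (forall z, Z z -> exists x, X x /\ f x = z).

Definition finite_subset {U : Type} (Z : U -> Prop) : Prop :=
  exists l : list U, forall z, Z z -> In z l.

Definition uniformly_supported {A : Type} (U : invset A) (Z : U -> Prop) : Prop :=
  exists S : list A, forall z, Z z -> supports (act U) S z.

Definition nat_invset (A : Type) : invset A.
Proof.
  refine (@InvSet A nat (fun _ n => n) _ _ _); auto.
  intros x; exists []; intros p _; reflexivity.
Defined.

Lemma fixes_app_l {A : Type} (S1 S2 : list A) p : fixes (S1 ++ S2) p -> fixes S1 p.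
Proof. intros H a Ha; apply H, in_or_app; auto. Qed.
Lemma fixes_app_r {A : Type} (S1 S2 : list A) p : fixes (S1 ++ S2) p -> fixes S2 p.
Proof. intros H a Ha; apply H, in_or_app; auto. Qed.

Definition prod_invset {A : Type} (U V : invset A) : invset A.
Proof.
  refine (@InvSet A (U * V)%type
            (fun p xy => (act U p (fst xy), act V p (snd xy))) _ _ _).
  - intros p [x y] H; simpl; f_equal; apply act_id; auto.
  - intros p q r [x y] H; simpl; f_equal; apply act_comp; auto.
  - intros [x y]. destruct (act_fin U x) as [S1 H1]. destruct (act_fin V y) as [S2 H2].
    exists (S1 ++ S2); intros p Hp; simpl; f_equal.
    + apply H1; eapply fixes_app_l; eauto.
    + apply H2; eapply fixes_app_r; eauto.
Defined.

(* disjoint union X + Y with pi.(i,z) = (i, pi.z); tags 0/1 rendered as inl/inr *)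
Definition sum_invset {A : Type} (U V : invset A) : invset A.
Proof.
  refine (@InvSet A (U + V)%type
            (fun p s => match s with inl x => inl (act U p x)
                                   | inr y => inr (act V p y) end) _ _ _).
  - intros p [x|y] H; f_equal; apply act_id; auto.
  - intros p q r [x|y] H; f_equal; apply act_comp; auto.
  - intros [x|y].
    + destruct (act_fin U x) as [S H]; exists S; intros p Hp; f_equal; auto.
    + destruct (act_fin V y) as [S H]; exists S; intros p Hp; f_equal; auto.
Defined.

Definition prod_subset {U V : Type} (X : U -> Prop) (Y : V -> Prop) : U * V -> Prop :=
  fun xy => X (fst xy) /\ Y (snd xy).

Definition sum_subset {U V : Type} (X : U -> Prop) (Y : V -> Prop) : U + V -> Prop :=
  fun s => match s with inl x => X x | inr y => Y y end.

(* A Dedekind-infinite X carries an injective sequence x0, f x0, f (f x0), ... all of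
   whose terms are supported by supp f together with supp x0; conversely, given such a
   uniformly supported injective sequence h, shifting h n to h (n+1) and fixing every
   other point is a finitely supported injection of X onto X minus h 0.  So X is
   Dedekind infinite iff it has an infinite uniformly supported subset.  An infinite
   uniformly supported subset of X x Y (or X + Y) has an infinite, still uniformly
   supported, projection onto one of the two factors. *)

From Stdlib Require Import List FinFun Classical ClassicalEpsilon Arith Lia.
Import ListNotations.
Set Implicit Arguments.

Section Permutations.
Variable A : Type.

Definition fperm_inv (p : fperm A) : fperm A.
Proof.
  refine (@FPerm A (pinv p) (pf p) (pinv_pf p) (pf_pinv p) _).
  destruct (pf_fin p) as [l Hl]; exists l; intros a Ha.
  transitivity (pinv p (pf p a)); [rewrite Hl; auto | apply pf_pinv].
Defined.

Definition fperm_id : fperm A :=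
  @FPerm A (fun a => a) (fun a => a) (fun a => eq_refl) (fun a => eq_refl)
    (ex_intro _ [] (fun a _ => eq_refl)).

Lemma fixes_fperm_inv (S : list A) p : fixes S p -> fixes S (fperm_inv p).
Proof.
  intros H a Ha; simpl.
  transitivity (pinv p (pf p a)); [rewrite H; auto | apply pf_pinv].
Qed.

Variable U : invset A.

Lemma act_inv_act p x : act U (fperm_inv p) (act U p x) = x.
Proof.
  rewrite <- (act_comp U (fperm_inv p) p fperm_id x).
  - apply act_id; reflexivity.
  - intros a; symmetry; apply pf_pinv.
Qed.

Lemma act_act_inv p x : act U p (act U (fperm_inv p) x) = x.
Proof.
  rewrite <- (act_comp U p (fperm_inv p) fperm_id x).
  - apply act_id; reflexivity.
  - intros a; symmetry; apply pinv_pf.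
Qed.

Lemma act_inj p : Injective (act U p).
Proof.
  intros x y E; apply (f_equal (act U (fperm_inv p))) in E.
  now rewrite !act_inv_act in E.
Qed.

Lemma act_eq_supported S p x y :
  supports (act U) S y -> fixes S p -> act U p x = y <-> x = y.
Proof.
  intros Hy Hp; rewrite <- (Hy p Hp) at 1; split.
  - apply act_inj.
  - intros ->; reflexivity.
Qed.

Lemma pstar_stable_iff S (Z : U -> Prop) :
  (forall p, fixes S p -> forall y, pstar U p Z y <-> Z y) <->
  (forall p, fixes S p -> forall y, Z (act U p y) <-> Z y).
Proof.
  split; intros H p Hp y.
  - split; intros Zy.
    + rewrite <- (act_inv_act p y).
      apply (H _ (fixes_fperm_inv Hp)); exists (act U p y); auto.
    + apply (H p Hp); exists y; auto.
  - split.
    + intros [x [Zx ->]]; apply H; auto.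
    + intros Zy; exists (act U (fperm_inv p) y); rewrite act_act_inv; split; auto.
      apply (H p Hp); rewrite act_act_inv; exact Zy.
Qed.

End Permutations.

Arguments fperm_inv {A} p.
Arguments act_inj {A} U p.
Arguments act_eq_supported {A} U {S p x y}.

Section FiniteSubsets.
Variable T : Type.

Lemma finite_subset_incl (P Q : T -> Prop) :
  (forall z, P z -> Q z) -> finite_subset Q -> finite_subset P.
Proof. intros PQ [l Hl]; exists l; auto. Qed.

Lemma injective_range_infinite (h : nat -> T) :
  Injective h -> ~ finite_subset (fun z => exists n, z = h n).
Proof.
  intros hi [l hl].
  assert (N : NoDup (map h (seq 0 (S (length l))))).
  { apply Injective_map_NoDup; [exact hi | apply seq_NoDup]. }
  assert (I : incl (map h (seq 0 (S (length l)))) l).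
  { intros x Hx; apply in_map_iff in Hx; destruct Hx as [n [<- _]]; eauto. }
  pose proof (NoDup_incl_length N I) as L.
  rewrite length_map, length_seq in L; lia.
Qed.

Fixpoint fresh_list (c : list T -> T) (n : nat) : list T :=
  match n with 0 => [] | S n => c (fresh_list c n) :: fresh_list c n end.

Lemma fresh_list_in (c : list T -> T) m n :
  m < n -> In (c (fresh_list c m)) (fresh_list c n).
Proof.
  induction n as [|n IH]; intros H; [lia|]; simpl.
  destruct (Nat.eq_dec m n) as [->|ne]; [left | right; apply IH; lia]; auto.
Qed.

Lemma infinite_subset_injection (R : T -> Prop) :
  ~ finite_subset R -> exists h : nat -> T, Injective h /\ forall n, R (h n).
Proof.
  intros Rinf.
  assert (fresh : forall l, exists x, R x /\ ~ In x l).
  { intros l; apply NNPP; intros nfresh; apply Rinf; exists l.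
    intros x Rx; apply NNPP; eauto. }
  pose (c l := proj1_sig (constructive_indefinite_description _ (fresh l))).
  assert (Hc : forall l, R (c l) /\ ~ In (c l) l).
  { intros l; exact (proj2_sig (constructive_indefinite_description _ (fresh l))). }
  exists (fun n => c (fresh_list c n)); split; [|intros; apply Hc].
  intros n m E; destruct (Nat.lt_total n m) as [lt|[eq|gt]]; auto; exfalso.
  - apply (proj2 (Hc (fresh_list c m))); rewrite <- E; apply fresh_list_in; auto.
  - apply (proj2 (Hc (fresh_list c n))); rewrite E; apply fresh_list_in; auto.
Qed.

Variable T' : Type.

Lemma finite_subset_prod (P : T -> Prop) (Q : T' -> Prop) :
  finite_subset P -> finite_subset Q -> finite_subset (prod_subset P Q).
Proof.
  intros [l Hl] [l' Hl']; exists (list_prod l l').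
  intros [x y] [Px Qy]; apply in_prod; auto.
Qed.

Lemma finite_subset_sum (P : T -> Prop) (Q : T' -> Prop) :
  finite_subset P -> finite_subset Q -> finite_subset (sum_subset P Q).
Proof.
  intros [l Hl] [l' Hl']; exists (map inl l ++ map inr l').
  intros [x|y] H; apply in_or_app; [left | right]; apply in_map; auto.
Qed.

End FiniteSubsets.

Section Shift.
Variables (T : Type) (h : nat -> T).
Hypothesis h_inj : Injective h.

Definition shift (x : T) : T :=
  match excluded_middle_informative (exists n, x = h n) with
  | left e => h (S (proj1_sig (constructive_indefinite_description _ e)))
  | right _ => x
  end.

Lemma shift_seq n : shift (h n) = h (S n).
Proof.
  unfold shift; destruct excluded_middle_informative as [e|ne].
  - destruct constructive_indefinite_description as [m Hm]; simpl.
    now apply h_inj in Hm as ->.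
  - exfalso; eauto.
Qed.

Lemma shift_out x : ~ (exists n, x = h n) -> shift x = x.
Proof. intros ne; unfold shift; destruct excluded_middle_informative; tauto. Qed.

Lemma shift_inj : Injective shift.
Proof.
  intros x y.
  destruct (classic (exists n, x = h n)) as [[n ->]|nx];
  destruct (classic (exists n, y = h n)) as [[m ->]|ny].
  - rewrite !shift_seq; intros E; apply h_inj in E; congruence.
  - rewrite shift_seq, (shift_out ny); intros E; exfalso; eauto.
  - rewrite shift_seq, (shift_out nx); intros E; exfalso; eauto.
  - rewrite (shift_out nx), (shift_out ny); auto.
Qed.

Lemma shift_neq_start x : shift x <> h 0.
Proof.
  destruct (classic (exists n, x = h n)) as [[n ->]|nx].
  - rewrite shift_seq; intros E; apply h_inj in E; discriminate.
  - rewrite (shift_out nx); intros ->; eauto.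
Qed.

Lemma shift_onto z : z <> h 0 -> exists x, (x = z \/ exists n, x = h n) /\ shift x = z.
Proof.
  intros nz; destruct (classic (exists n, z = h n)) as [[[|n] ->]|ne].
  - tauto.
  - exists (h n); rewrite shift_seq; eauto.
  - exists z; rewrite shift_out; auto.
Qed.

End Shift.

Section UniformSequences.
Variables (A : Type) (U : invset A).

Definition uniform_seq (X : U -> Prop) (h : nat -> U) : Prop :=
  Injective h /\ (forall n, X (h n)) /\
  exists S : list A, forall n, supports (act U) S (h n).

Lemma shift_act X h S p x :
  uniform_seq X h -> (forall n, supports (act U) S (h n)) -> fixes S p ->
  shift h (act U p x) = act U p (shift h x).
Proof.
  intros [hi _] hS Hp.
  destruct (classic (exists n, x = h n)) as [[n ->]|nx].
  - rewrite (hS n p Hp), !shift_seq by exact hi; symmetry; apply hS, Hp.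
  - rewrite !shift_out; auto.
    intros [n E]; apply nx; exists n; apply (act_eq_supported U (hS n) Hp), E.
Qed.

Lemma fs_fun_nat_uniform_seq (X : U -> Prop) (h : nat -> U) :
  fs_subset U X ->
  (fs_fun (nat_invset A) U (fun _ => True) X h /\ inj_on (fun _ => True) h <->
   uniform_seq X h).
Proof.
  intros [SX HX]; split.
  - intros [[hX [S Hh]] hi]; split; [|split].
    + intros n m; apply hi; auto.
    + intros n; apply hX; auto.
    + exists S; intros n p Hp; symmetry; apply (proj2 (proj2 (Hh p Hp)) n I).
  - intros [hi [hX [S hS]]]; split; [split|].
    + intros n _; apply hX.
    + exists (S ++ SX); intros p Hp; split; [|split].
      * intros n; split; [auto | intros _; exists n; auto].
      * apply HX, (fixes_app_r _ _ Hp).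
      * intros n _; symmetry; apply hS, (fixes_app_l _ _ Hp).
    + intros n m _ _; apply hi.
Qed.

Lemma dedekind_infinite_uniform_seq (X : U -> Prop) :
  fsm_dedekind_infinite U X -> exists h, uniform_seq X h.
Proof.
  intros [Z [f [_ [ZX [[x0 [Xx0 nZx0]] [[fXZ [Sf Hf]] [finj _]]]]]]].
  destruct (act_fin U x0) as [S0 H0].
  assert (HX : forall n, X (Nat.iter n f x0)) by (induction n; simpl; auto).
  exists (fun n => Nat.iter n f x0); split; [|split; [exact HX|]].
  - (* the orbit starts outside the image [Z] of the injection [f] *)
    intros n; induction n as [|n IH]; intros [|m] E; simpl in E; auto.
    + exfalso; apply nZx0; rewrite E; auto.
    + exfalso; apply nZx0; rewrite <- E; auto.
  - exists (Sf ++ S0); intros n; induction n as [|n IH]; intros p Hp; simpl.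
    + apply H0, (fixes_app_r _ _ Hp).
    + destruct (Hf p (fixes_app_l _ _ Hp)) as [_ [_ Hfe]].
      now rewrite <- Hfe, IH.
Qed.

Lemma uniform_seq_dedekind_infinite (X : U -> Prop) h :
  fs_subset U X -> uniform_seq X h -> fsm_dedekind_infinite U X.
Proof.
  intros [SX HX] hu; pose proof hu as [hi [hX [S hS]]].
  set (Z x := X x /\ x <> h 0).
  assert (HXp : forall p, fixes (S ++ SX) p -> forall y, X (act U p y) <-> X y).
  { intros p Hp; apply (pstar_stable_iff U SX X); auto; exact (fixes_app_r _ _ Hp). }
  assert (HZp : forall p, fixes (S ++ SX) p -> forall y, Z (act U p y) <-> Z y).
  { intros p Hp y; unfold Z; rewrite (HXp p Hp).
    now rewrite (act_eq_supported U (hS 0) (fixes_app_l _ _ Hp)). }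
  assert (shiftX : forall x, X x -> X (shift h x)).
  { intros x Xx; destruct (classic (exists n, x = h n)) as [[n ->]|nx].
    - rewrite shift_seq; auto.
    - rewrite shift_out; auto. }
  exists Z, (shift h); split; [|split; [|split; [|split; [|split]]]].
  - exists (S ++ SX); apply pstar_stable_iff, HZp.
  - intros z [Xz _]; exact Xz.
  - exists (h 0); unfold Z; split; auto; tauto.
  - split.
    + intros x Xx; split; [auto | apply shift_neq_start, hi].
    + exists (S ++ SX); intros p Hp; split; [|split].
      * exact (proj2 (pstar_stable_iff U _ X) HXp p Hp).
      * exact (proj2 (pstar_stable_iff U _ Z) HZp p Hp).
      * intros x _; apply (shift_act x hu hS), (fixes_app_l _ _ Hp).
  - intros x y _ _; apply shift_inj, hi.
  - intros z [Xz nz]; destruct (shift_onto hi nz) as [x [[->|[n ->]] E]]; eauto.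
Qed.

Definition has_infinite_uniform_subset (X : U -> Prop) : Prop :=
  exists Z : U -> Prop, (forall z, Z z -> X z) /\
    uniformly_supported U Z /\ ~ finite_subset Z.

Lemma dedekind_infinite_uniform_subset (X : U -> Prop) :
  fsm_dedekind_infinite U X -> has_infinite_uniform_subset X.
Proof.
  intros D; destruct (dedekind_infinite_uniform_seq D) as [h [hi [hX [S hS]]]].
  exists (fun z => exists n, z = h n); split; [|split].
  - intros z [n ->]; auto.
  - exists S; intros z [n ->]; auto.
  - apply injective_range_infinite, hi.
Qed.

Lemma uniform_subset_dedekind_infinite (X : U -> Prop) :
  fs_subset U X -> has_infinite_uniform_subset X -> fsm_dedekind_infinite U X.
Proof.
  intros hX [Z [ZX [[S ZS] Zinf]]].
  destruct (infinite_subset_injection Zinf) as [h [hi hZ]].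
  apply (uniform_seq_dedekind_infinite hX (h := h)); split; [|split]; auto.
  exists S; auto.
Qed.

Lemma finite_of_not_dedekind_infinite (X R : U -> Prop) :
  fs_subset U X -> ~ fsm_dedekind_infinite U X -> (forall x, R x -> X x) ->
  uniformly_supported U R -> finite_subset R.
Proof.
  intros hX nX RX uR; apply NNPP; intros Rinf.
  apply nX, uniform_subset_dedekind_infinite; auto; exists R; auto.
Qed.

End UniformSequences.

Section ProductsAndSums.
Variables (A : Type) (U V : invset A).

Lemma uniformly_supported_fst (R : prod_invset U V -> Prop) :
  uniformly_supported (prod_invset U V) R ->
  uniformly_supported U (fun x => exists y, R (x, y)).
Proof.
  intros [S HS]; exists S; intros x [y Rxy] p Hp.
  exact (f_equal fst (HS _ Rxy p Hp)).
Qed.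

Lemma uniformly_supported_snd (R : prod_invset U V -> Prop) :
  uniformly_supported (prod_invset U V) R ->
  uniformly_supported V (fun y => exists x, R (x, y)).
Proof.
  intros [S HS]; exists S; intros y [x Rxy] p Hp.
  exact (f_equal snd (HS _ Rxy p Hp)).
Qed.

Lemma uniformly_supported_inl (R : sum_invset U V -> Prop) :
  uniformly_supported (sum_invset U V) R ->
  uniformly_supported U (fun x => R (inl x)).
Proof.
  intros [S HS]; exists S; intros x Rx p Hp.
  pose proof (HS _ Rx p Hp) as E; simpl in E; congruence.
Qed.

Lemma uniformly_supported_inr (R : sum_invset U V -> Prop) :
  uniformly_supported (sum_invset U V) R ->
  uniformly_supported V (fun y => R (inr y)).
Proof.
  intros [S HS]; exists S; intros y Ry p Hp.
  pose proof (HS _ Ry p Hp) as E; simpl in E; congruence.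
Qed.

Variables (X : U -> Prop) (Y : V -> Prop).
Hypotheses (hX : fs_subset U X) (hY : fs_subset V Y).

Lemma prod_not_dedekind_infinite :
  ~ fsm_dedekind_infinite U X -> ~ fsm_dedekind_infinite V Y ->
  ~ fsm_dedekind_infinite (prod_invset U V) (prod_subset X Y).
Proof.
  intros nX nY D.
  destruct (dedekind_infinite_uniform_subset D) as [R [RXY [uR Rinf]]].
  apply Rinf, finite_subset_incl with (Q := prod_subset (fun x => exists y, R (x, y))
                                                      (fun y => exists x, R (x, y))).
  { intros [x y] Rxy; split; eauto. }
  apply finite_subset_prod.
  - apply (finite_of_not_dedekind_infinite hX nX); [|apply uniformly_supported_fst, uR].
    intros x [y Rxy]; apply (RXY _ Rxy).
  - apply (finite_of_not_dedekind_infinite hY nY);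
      [|apply uniformly_supported_snd, uR].
    intros y [x Rxy]; apply (RXY _ Rxy).
Qed.

Lemma sum_not_dedekind_infinite :
  ~ fsm_dedekind_infinite U X -> ~ fsm_dedekind_infinite V Y ->
  ~ fsm_dedekind_infinite (sum_invset U V) (sum_subset X Y).
Proof.
  intros nX nY D.
  destruct (dedekind_infinite_uniform_subset D) as [R [RXY [uR Rinf]]].
  apply Rinf, finite_subset_incl with (Q := sum_subset (fun x => R (inl x))
                                                     (fun y => R (inr y))).
  { intros [x|y] H; exact H. }
  apply finite_subset_sum.
  - apply (finite_of_not_dedekind_infinite hX nX); [|apply uniformly_supported_inl, uR].
    intros x Rx; apply (RXY _ Rx).
  - apply (finite_of_not_dedekind_infinite hY nY);
      [|apply uniformly_supported_inr, uR].
    intros y Ry; apply (RXY _ Ry).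
Qed.

End ProductsAndSums.

Theorem mainTheorem9 (A : Type) (HA : infinite_type A) (U V : invset A)
  (X : U -> Prop) (Y : V -> Prop) (hX : fs_subset U X) (hY : fs_subset V Y) :
  (* (1) *)
  (fsm_dedekind_infinite U X <->
     exists f : nat -> U,
       fs_fun (nat_invset A) U (fun _ => True) X f /\ inj_on (fun _ => True) f) /\
  (* (4) *)
  ((~ exists Z : U -> Prop, (forall z, Z z -> X z) /\
        uniformly_supported U Z /\ ~ finite_subset Z) ->
     ~ fsm_dedekind_infinite U X) /\
  (* (6) *)
  (~ fsm_dedekind_infinite U X -> ~ fsm_dedekind_infinite V Y ->
     ~ fsm_dedekind_infinite (prod_invset U V) (prod_subset X Y)) /\
  (* (7) *)
  (~ fsm_dedekind_infinite U X -> ~ fsm_dedekind_infinite V Y ->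
     ~ fsm_dedekind_infinite (sum_invset U V) (sum_subset X Y)).
Proof.
  split; [split|split; [|split]].
  - intros D; destruct (dedekind_infinite_uniform_seq D) as [h hu].
    exists h; apply fs_fun_nat_uniform_seq; auto.
  - intros [h hh]; apply (uniform_seq_dedekind_infinite hX (h := h)).
    apply fs_fun_nat_uniform_seq; auto.
  - intros nZ D; apply nZ, dedekind_infinite_uniform_subset, D.
  - apply prod_not_dedekind_infinite; auto.
  - apply sum_not_dedekind_infinite; auto.
Qed.
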